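(* (i) If for some $m\ge0$ every solution of the expanded equation $z_{n+1}=\sum_{j=0}^{k-1}b_{m,j}z_{n-m-j}$ converges to $0$, then every solution of $x_{n+1}=\sum_{j=0}^{k-1}a_jx_{n-j}$ converges to $0$. (ii) If every solution of $x_{n+1}=\sum_{j=0}^{k-1}a_jx_{n-j}$ converges to $0$ and, for some $m\ge 0$, all zeros of $q_m$ lie in the open unit disk $\mathbb{D}=\{z\in\mathbb{C}:|z|<1\}$, then every solution of $z_{n+1}=\sum_{j=0}^{k-1}b_{m,j}z_{n-m-j}$ converges to $0$.
   Context: Let $k\ge 2$, $a_0,\dots,a_{k-1}\in\mathbb{R}$, $a_0\ne0$. Define $b_{0,j}=a_j$ ($0\le j\le k-1$) and for $m\ge0$: $b_{m+1,j}=a_jb_{m,0}+b_{m,j+1}$ ($0\le j\le k-2$), $b_{m+1,k-1}=a_{k-1}b_{m,0}$. The equation $z_{n+1}=\sum_{j=0}^{k-1}b_{m,j}z_{n-m-j}$ (with $m+k$ arbitrary real initial values) is the $m$-times expanded equation. $q_m(x)=x^m+\sum_{i=0}^{m-1}b_{i,0}x^{m-i-1}$, with $q_0\equiv 1$. (Every solution converging to $0$ is equivalent to all zeros of the corresponding characteristic polynomial lying in $\mathbb{D}$.) *)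

From HB Require Import structures.
From mathcomp Require Import all_boot all_order all_algebra.
From mathcomp Require Import complex.
From mathcomp Require Import all_classical all_reals all_analysis.
Set Implicit Arguments. Unset Strict Implicit. Unset Printing Implicit Defensive.
Import Order.TTheory GRing.Theory Num.Theory.
Import numFieldNormedType.Exports.
Local Open Scope ring_scope.

(* Coefficients b_{m,j} of the m-times expanded equation.
   b 0 j = a j ;  b (m+1) j = a j * b m 0 + b m (j+1)  for j <= k-2,
   b (m+1) (k-1) = a (k-1) * b m 0. Only indices j < k are meaningful. *)
Fixpoint exp_bcoef (R : nzRingType) (k : nat) (a : nat -> R) (m : nat) : nat -> R :=
  match m with
  | 0 => a
  | m'.+1 => fun j => a j * exp_bcoef k a m' 0 +
                       (if (j.+1 < k)%N then exp_bcoef k a m' j.+1 else 0)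
  end.

Definition solves_rec (R : nzRingType) (k d : nat) (c : nat -> R) (x : nat -> R) :=
  forall n : nat, (d + k - 1 <= n)%N ->
    x n.+1 = \sum_(j < k) c j * x (n - d - j)%N.

Definition expq_poly (R : nzRingType) (k : nat) (a : nat -> R) (m : nat) : {poly R} :=
  'X^m + \sum_(i < m) (exp_bcoef k a i 0)%:P * 'X^(m - i - 1).

Definition zeros_in_unit_disk (R : rcfType) (p : {poly R}) :=
  forall z : R[i], root (map_poly (fun r : R => r%:C)%C p) z -> `|z| < 1.

From HB Require Import structures.
From mathcomp Require Import all_boot all_order all_algebra.
From mathcomp Require Import complex.
From mathcomp Require Import all_classical all_reals all_analysis.
From mathcomp Require Import zify ring lra.
Set Implicit Arguments. Unset Strict Implicit. Unset Printing Implicit Defensive.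
Import Order.TTheory GRing.Theory Num.Theory.
Import numFieldNormedType.Exports.
Local Open Scope classical_set_scope.
Local Open Scope ring_scope.

(* Substituting the recurrence into itself shows that every solution of the
   original equation solves the expanded one, which gives (i).  For (ii), the
   characteristic polynomial X^(m+k) - \sum_j b_{m,j} X^(k-1-j) of the expanded
   equation factors as p * q_m, where p is the characteristic polynomial of the
   original equation.  The zeros of p lie in the unit disk, since for a zero l
   the real and imaginary parts of l^n are solutions of the original equation.
   Hence the expanded characteristic polynomial splits over C into factors
   X - l with |l| < 1, and each first order operator u |-> u_{n+1} - l u_n
   reflects convergence to 0 by a contraction estimate. *)

Section ShiftOperator.
Variable T : comNzRingType.
Implicit Types (p q : {poly T}) (u : nat -> T).

(* [pshift u n p] is [(p(E) u)_n], where [E] is the forward shift of sequences. *)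
Definition pshift u n p : T := \sum_(i < size p) p`_i * u (n + i)%N.

Lemma pshiftE u n p N : (size p <= N)%N ->
  pshift u n p = \sum_(i < N) p`_i * u (n + i)%N.
Proof.
move=> leN; rewrite /pshift (big_ord_widen N (fun i => p`_i * u (n + i)%N)) //.
rewrite big_mkcond; apply: eq_bigr => i _.
by case: ltnP => // ?; rewrite nth_default ?mul0r.
Qed.

Lemma pshift_is_scalar u n : scalar (pshift u n).
Proof.
move=> c p q; set N := maxn (size p) (size q).
have lepN : (size p <= N)%N by rewrite leq_maxl.
have leqN : (size q <= N)%N by rewrite leq_maxr.
have lepqN : (size (c *: p + q)%R <= N)%N.
  by rewrite (leq_trans (size_polyD _ _)) // geq_max (leq_trans (size_scale_leq _ _)).
rewrite (pshiftE _ _ lepN) (pshiftE _ _ leqN) (pshiftE _ _ lepqN) mulr_sumr.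
by rewrite -big_split; apply: eq_bigr => i _; rewrite coefD coefZ mulrDl mulrA.
Qed.

HB.instance Definition _ u n :=
  GRing.isLinear.Build T {poly T} T _ (pshift u n) (pshift_is_scalar u n).

Lemma pshiftC u n c : pshift u n c%:P = c * u n.
Proof. by rewrite (pshiftE _ _ (size_polyC_leq1 c)) big_ord1 coefC addn0. Qed.

Lemma pshiftXM u n p : pshift u n ('X * p) = pshift u n.+1 p.
Proof.
have le_size : (size ('X * p)%R <= (size p).+1)%N.
  by rewrite (leq_trans (size_polyMleq _ _)) // size_polyX; case: (size p).
rewrite (pshiftE _ _ le_size) big_ord_recl coefXM mul0r add0r.
by apply: eq_bigr => i _; rewrite coefXM addnS.
Qed.

Lemma pshiftXn u n i : pshift u n 'X^i = u (n + i)%N.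
Proof.
elim: i n => [|i IHi] n; first by rewrite expr0 -polyC1 pshiftC mul1r addn0.
by rewrite exprS pshiftXM IHi addSnnS.
Qed.

Lemma pshiftM u n p q : pshift u n (p * q) = pshift (fun m => pshift u m p) n q.
Proof.
elim/poly_ind: q u n => [|q c IHq] u n; first by rewrite mulr0 !linear0.
have -> : p * (q * 'X + c%:P) = 'X * (p * q) + c *: p by rewrite -mul_polyC; ring.
by rewrite [q * 'X]mulrC !linearD !linearZ /= !pshiftXM IHq pshiftC.
Qed.

End ShiftOperator.

Section RecurrencePolynomial.
Variables (T : comNzRingType) (k d : nat) (c : nat -> T).

Definition rec_charpoly : {poly T} :=
  'X^(d + k) - \sum_(j < k) (c j)%:P * 'X^(k - 1 - j).

Lemma rec_charpoly_monic : rec_charpoly \is monic.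
Proof.
have size_tail : (size (\sum_(j < k) (c j)%:P * 'X^(k - 1 - j))%R <= k)%N.
  elim/big_ind: _ => [|p q lep leq|j _]; first by rewrite size_poly0.
    by rewrite (leq_trans (size_polyD _ _)) // geq_max lep leq.
  rewrite mul_polyC (leq_trans (size_scale_leq _ _)) // size_polyXn.
  by have := ltn_ord j; lia.
apply/monicP; rewrite lead_coefDl ?lead_coefXn // size_polyN size_polyXn ltnS.
exact: leq_trans size_tail (leq_addl _ _).
Qed.

Lemma pshift_rec_charpoly (x : nat -> T) : (0 < k)%N ->
  solves_rec k d c x -> forall n, pshift x n rec_charpoly = 0.
Proof.
move=> k_gt0 solx n; apply/eqP; rewrite linearB linear_sum /= subr_eq0 pshiftXn.
have -> : (n + (d + k) = (n + d + k - 1).+1)%N by lia.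
rewrite solx; last by lia.
apply/eqP/eq_bigr => j _; rewrite mul_polyC linearZ /= pshiftXn.
by congr (_ * x _); have := ltn_ord j; lia.
Qed.

Lemma solves_rec_geometric (l : T) :
  root rec_charpoly l -> solves_rec k d c (fun n => l ^+ n).
Proof.
rewrite /root !hornerE horner_sum subr_eq0 => /eqP root_l n le_n.
have -> : n.+1 = ((n.+1 - (d + k)) + (d + k))%N by lia.
rewrite exprD root_l mulr_sumr; apply: eq_bigr => j _.
rewrite hornerCM hornerXn mulrCA -exprD; congr (_ * l ^+ _); have := ltn_ord j; lia.
Qed.

End RecurrencePolynomial.

Lemma map_rec_charpoly (A B : comNzRingType) (f : {rmorphism A -> B}) k d c :
  map_poly f (rec_charpoly k d c) = rec_charpoly k d (f \o c).
Proof.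
rewrite rmorphB /= map_polyXn rmorph_sum; congr (_ - _).
by apply: eq_bigr => j _; rewrite rmorphM /= map_polyC map_polyXn.
Qed.

Section Expansion.
Variables (T : comNzRingType) (a : nat -> T).

Lemma expq_polyS k m :
  expq_poly k a m.+1 = 'X * expq_poly k a m + (exp_bcoef k a m 0)%:P.
Proof.
rewrite /expq_poly big_ord_recr /=.
have -> : (m.+1 - m - 1 = 0)%N by lia.
rewrite expr0 mulr1 mulrDr addrA.
congr (_ + _); rewrite exprS mulr_sumr; congr (_ + _); apply: eq_bigr => i _.
by rewrite mulrCA -exprS; congr (_ * 'X^_); have := ltn_ord i; lia.
Qed.

Lemma rec_charpoly_expandS k m :
  rec_charpoly k.+1 m.+1 (exp_bcoef k.+1 a m.+1) =
    'X * rec_charpoly k.+1 m (exp_bcoef k.+1 a m)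
    + exp_bcoef k.+1 a m 0 *: rec_charpoly k.+1 0 a.
Proof.
rewrite /rec_charpoly /= !subn1 /=; set b := exp_bcoef k.+1 a m.
set S := \sum_(j < k) (b j.+1)%:P * 'X^(k - j).
have next_coefs : \sum_(j < k.+1)
    (a j * b 0 + (if (j.+1 < k.+1)%N then b j.+1 else 0))%:P * 'X^(k - j)
  = (b 0)%:P * \sum_(j < k.+1) (a j)%:P * 'X^(k - j) + S.
  under eq_bigr do rewrite polyCD mulrDl.
  rewrite big_split /= mulr_sumr; congr (_ + _).
    by apply: eq_bigr => j _; rewrite polyCM [(a _)%:P * _]mulrC -mulrA.
  rewrite big_ord_recr /= ltnn mul0r addr0; apply: eq_bigr => j _.
  by rewrite ltnS ltn_ord.
have shifted_coefs : 'X * \sum_(j < k.+1) (b j)%:P * 'X^(k - j)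
    = (b 0)%:P * 'X^(k.+1) + S.
  rewrite mulr_sumr big_ord_recl /= subn0 mulrCA -exprS; congr (_ + _).
  apply: eq_bigr => j _; rewrite mulrCA -exprS /bump /=.
  by congr (_ * 'X^_); have := ltn_ord j; lia.
rewrite next_coefs mulrBr shifted_coefs -!mul_polyC addSn exprS; ring.
Qed.

Lemma rec_charpoly_expand k m : (0 < k)%N ->
  rec_charpoly k m (exp_bcoef k a m) = rec_charpoly k 0 a * expq_poly k a m.
Proof.
case: k => [//|k] _; elim: m => [|m IHm].
  by rewrite /expq_poly big_ord0 addr0 expr0 mulr1.
by rewrite rec_charpoly_expandS IHm expq_polyS -mul_polyC; ring.
Qed.

Lemma solves_rec_expand k m (x : nat -> T) : (0 < k)%N ->
  solves_rec k 0 a x -> solves_rec k m (exp_bcoef k a m) x.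
Proof.
case: k => [//|k] _ solx; elim: m => [//|m IHm] n le_n.
rewrite (IHm n); last by lia.
rewrite big_ord_recl /= subn0.
have -> : (n - m = (n - m - 1).+1)%N by lia.
rewrite (solx (n - m - 1)%N); last by lia.
under [in RHS]eq_bigr do rewrite mulrDl.
rewrite big_split /= [X in _ = _ + X]big_ord_recr /= ltnn mul0r addr0 mulr_sumr.
congr (_ + _); apply: eq_bigr => j _.
  by rewrite -mulrA mulrCA; congr (_ * (_ * x _)); lia.
by rewrite /bump /= ltnS ltn_ord; congr (_ * x _); lia.
Qed.

End Expansion.

Section Contraction.
Variables (R : archiRealFieldType) (c : R) (A B : nat -> R).
Hypotheses (c_ge0 : 0 <= c) (c_lt1 : c < 1) (A_ge0 : forall n, 0 <= A n).
Hypothesis A_contracts : forall n, A n.+1 <= c * A n + B n.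

(* [b / (1 - c)] is the fixed point of [y |-> c * y + b]. *)
Lemma contraction_iter N b : 0 <= b -> (forall n, (N <= n)%N -> B n <= b) ->
  forall j, A (N + j)%N <= c ^+ j * A N + b / (1 - c).
Proof.
move=> b_ge0 le_Bb; elim=> [|j IHj].
  by rewrite addn0 expr0 mul1r lerDl divr_ge0 // subr_ge0 ltW.
have fixed_point : c * (b / (1 - c)) + b = b / (1 - c).
  by field; rewrite subr_eq0 gt_eqF.
rewrite addnS -fixed_point exprS -mulrA addrA -mulrDr.
exact: le_trans (A_contracts _) (lerD (ler_wpM2l c_ge0 IHj) (le_Bb _ (leq_addr _ _))).
Qed.

Lemma cvg0_contraction : B @ \oo --> 0 -> A @ \oo --> 0.
Proof.
move=> /cvgr0Pnorm_lt B0; apply/cvgr0Pnorm_lt => e e_gt0.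
have e2_gt0 : 0 < e / 2 by rewrite divr_gt0.
have b_gt0 : 0 < e / 2 * (1 - c) by rewrite mulr_gt0 // subr_gt0.
have [N _ B_small] := B0 _ b_gt0.
have geo0 : (fun j => c ^+ j * A N) @ \oo --> 0.
  by rewrite -(mul0r (A N)); apply: cvgM (cvg_cst _); apply: cvg_expr; rewrite ger0_norm.
move/cvgr0Pnorm_lt: geo0 => /(_ _ e2_gt0) [J _ geo_small].
exists (N + J)%N => // n /= le_n.
have -> : n = (N + (n - N))%N by lia.
have := contraction_iter (ltW b_gt0)
  (fun n le_n => le_trans (ler_norm _) (ltW (B_small n le_n))) (n - N).
have := geo_small (n - N)%N ltac:(rewrite /=; lia).
rewrite mulfK ?subr_eq0 ?gt_eqF // !ger0_norm ?mulr_ge0 ?exprn_ge0 //.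
lra.
Qed.

End Contraction.

Lemma pshift_map (F : fieldType) (B : comNzRingType) (f : {rmorphism F -> B})
    (u : nat -> F) n p :
  pshift (fun m => f (u m)) n (map_poly f p) = f (pshift u n p).
Proof.
rewrite /pshift size_map_poly rmorph_sum; apply: eq_bigr => i _.
by rewrite coef_map rmorphM.
Qed.

Lemma zeros_in_unit_diskM (R : rcfType) (p q : {poly R}) :
  zeros_in_unit_disk p -> zeros_in_unit_disk q -> zeros_in_unit_disk (p * q).
Proof. by move=> p_zeros q_zeros z; rewrite rmorphM rootM => /orP[/p_zeros|/q_zeros]. Qed.

Import Normc.

Section ComplexSequences.
Variable R : realType.
Local Open Scope complex_scope.

Lemma normc_ge0 (z : R[i]) : 0 <= normc z.
Proof. by case: z => x y; apply: sqrtr_ge0. Qed.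

Lemma normc_real (r : R) : normc r%:C = `|r|.
Proof. by rewrite /normc /= expr0n addr0 sqrtr_sqr. Qed.

Lemma normcE (z : R[i]) : `|z| = (normc z)%:C.
Proof. by rewrite normc_def; case: z. Qed.

Lemma normcX (z : R[i]) n : normc (z ^+ n) = normc z ^+ n.
Proof. by elim: n => [|n IHn]; rewrite ?normc1 // !exprS normcM IHn. Qed.

Lemma normc_le_ReIm (z : R[i]) : normc z <= `|complex.Re z| + `|complex.Im z|.
Proof.
rewrite {1}[z]complexE -!normc_real.
have normci : normc 'i = 1 :> R by rewrite /normc /= expr0n expr1n add0r sqrtr1.
by rewrite (le_trans (le_normcD _ _)) // normcM normci mul1r.
Qed.

Lemma Re_scale (r : R) (z : R[i]) : complex.Re (r%:C * z) = r * complex.Re z.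
Proof. by case: z => x y /=; rewrite mul0r subr0. Qed.

Lemma Im_scale (r : R) (z : R[i]) : complex.Im (r%:C * z) = r * complex.Im z.
Proof. by case: z => x y /=; rewrite mul0r addr0. Qed.

Lemma solves_rec_Re k d (c : nat -> R) (w : nat -> R[i]) :
  solves_rec k d (fun j => (c j)%:C) w -> solves_rec k d c (fun n => complex.Re (w n)).
Proof.
move=> solw n le_n; rewrite solw // (raddf_sum (@complex.Re R : Rcomplex R -> R)).
by apply: eq_bigr => j _; exact: Re_scale.
Qed.

Lemma solves_rec_Im k d (c : nat -> R) (w : nat -> R[i]) :
  solves_rec k d (fun j => (c j)%:C) w -> solves_rec k d c (fun n => complex.Im (w n)).
Proof.
move=> solw n le_n; rewrite solw // (raddf_sum (@complex.Im R : Rcomplex R -> R)).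
by apply: eq_bigr => j _; exact: Im_scale.
Qed.

Lemma cvg0_first_order (l : R[i]) (u : nat -> R[i]) : normc l < 1 ->
  (fun n => normc (u n.+1 - l * u n)) @ \oo --> 0 ->
  (fun n => normc (u n)) @ \oo --> 0.
Proof.
move=> l_lt1; apply: cvg0_contraction (normc_ge0 l) l_lt1 (fun n => normc_ge0 _) _.
move=> n; rewrite -{1}(subrK (l * u n) (u n.+1)) addrC -normcM.
exact: le_normcD.
Qed.

Lemma cvg0_pshift_prod_XsubC (rs : seq R[i]) (u : nat -> R[i]) :
  (forall z, z \in rs -> normc z < 1) ->
  (fun n => normc (pshift u n (\prod_(z <- rs) ('X - z%:P)))) @ \oo --> 0 ->
  (fun n => normc (u n)) @ \oo --> 0.
Proof.
elim: rs u => [|z rs IHrs] u rs_lt1.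
  by rewrite big_nil -polyC1; under eq_fun do rewrite pshiftC mul1r.
rewrite big_cons; under eq_fun do rewrite pshiftM.
have rs_lt1' y : y \in rs -> normc y < 1 by move=> y_rs; rewrite rs_lt1 // in_cons y_rs orbT.
move=> /(IHrs _ rs_lt1').
under eq_fun do rewrite linearB /= pshiftC -['X]expr1 pshiftXn addn1.
by apply: cvg0_first_order; apply: rs_lt1; rewrite mem_head.
Qed.

Lemma cvg0_pshift_stable (p : {poly R}) (u : nat -> R) :
  p \is monic -> zeros_in_unit_disk p ->
  (fun n => pshift u n p) @ \oo --> 0 -> u @ \oo --> 0.
Proof.
move=> p_monic p_zeros pu0.
have [rs p_factor] := closed_field_poly_normal (map_poly (real_complex R) p).
rewrite lead_coef_map (monicP p_monic) rmorph1 scale1r in p_factor.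
apply/norm_cvg0P; under eq_fun do rewrite -normc_real.
apply: (cvg0_pshift_prod_XsubC (rs := rs)).
  move=> z z_rs; rewrite -ltcR -normcE; apply: p_zeros.
  by rewrite p_factor root_prod_XsubC.
rewrite -p_factor; under eq_fun do rewrite pshift_map normc_real.
exact/norm_cvg0P.
Qed.

Lemma rec_charpoly_zeros_in_unit_disk k d (c : nat -> R) :
  (forall x, solves_rec k d c x -> x @ \oo --> 0) ->
  zeros_in_unit_disk (rec_charpoly k d c).
Proof.
move=> stable z; rewrite map_rec_charpoly => /solves_rec_geometric geo.
rewrite normcE ltcR ltNge; apply/negP => normz_ge1.
have half_gt0 : 0 < 1 / 2 :> R by [].
move/cvgr0Pnorm_lt: (stable _ (solves_rec_Re geo)) => /(_ _ half_gt0) [N1 _ Re_small].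
move/cvgr0Pnorm_lt: (stable _ (solves_rec_Im geo)) => /(_ _ half_gt0) [N2 _ Im_small].
set n := maxn N1 N2.
have := normc_le_ReIm (z ^+ n); rewrite normcX.
have := Re_small n (leq_maxl _ _); have := Im_small n (leq_maxr _ _).
have := exprn_ege1 n normz_ge1; lra.
Qed.

End ComplexSequences.

Theorem mainTheorem6 (R : realType) (k : nat) (a : nat -> R) :
  (2 <= k)%N -> a 0%N != 0 ->
  (* (i) *)
  ((exists m : nat, forall z : nat -> R,
      solves_rec k m (exp_bcoef k a m) z -> z @ \oo --> (0 : R)) ->
   forall x : nat -> R, solves_rec k 0 a x -> x @ \oo --> (0 : R))
  /\
  (* (ii) *)
  ((forall x : nat -> R, solves_rec k 0 a x -> x @ \oo --> (0 : R)) ->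
   forall m : nat, zeros_in_unit_disk (expq_poly k a m) ->
   forall z : nat -> R, solves_rec k m (exp_bcoef k a m) z -> z @ \oo --> (0 : R)).
Proof.
move=> k_ge2 _; have k_gt0 : (0 < k)%N by apply: leq_trans k_ge2.
split=> [[m stable_m] x solx|stable m q_zeros z solz].
  exact/stable_m/solves_rec_expand.
apply: (cvg0_pshift_stable (rec_charpoly_monic k m (exp_bcoef k a m))).
  rewrite rec_charpoly_expand //; apply: zeros_in_unit_diskM q_zeros.
  exact: rec_charpoly_zeros_in_unit_disk.
under eq_fun do rewrite (pshift_rec_charpoly k_gt0 solz).
exact: cvg_cst.
Qed.
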